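(* Let $v\ge2$ and $k\in\{3,4\}$. Then an optimum $(d,2)$-CDA$((d+1)v^2;k,v)$ exists for every positive integer $d$ with $d+1\le v$.
   Context: Consecutive $t$-way interaction in an $N\times k$ array $A=(a_{ij})$ over a $v$-set $V$: $T=\{(i,x_i),\dots,(i+t-1,x_{i+t-1})\}$, $1\le i\le k-t+1$, $x_r\in V$; $\rho(A,T)=\{r: a_{r,j}=x_j\ \forall (j,x_j)\in T\}$, $\rho(A,\mathcal T)=\bigcup_{T\in\mathcal T}\rho(A,T)$. A $(d,t)$-CDA$(N;k,v)$ is an $N\times k$ array over $V$ in which every $t$ consecutive columns contain every $t$-tuple at least once, and such that for every set $\mathcal T$ of exactly $d$ distinct consecutive $t$-way interactions and every consecutive $t$-way interaction $T$: $\rho(A,T)\subseteq\rho(A,\mathcal T)$ iff $T\in\mathcal T$. It is optimum if $N=(d+1)v^t$. *)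

From mathcomp Require Import all_boot.
Set Implicit Arguments. Unset Strict Implicit. Unset Printing Implicit Defensive.

(* An N x k array over the v-set 'I_v: entry (row r, column c) is A r c.
   Columns are numbered 0..k-1 (the paper uses 1..k). *)
Definition array (N k v : nat) := 'I_N -> 'I_k -> 'I_v.

(* A consecutive t-way interaction is determined by its starting column i
   (0-based) and its values x_0..x_{t-1}; it is the set
   {(i, x 0), ..., (i+t-1, x (t-1))}.  It is valid iff i + t <= k. *)
Definition interaction (k t v : nat) := ('I_k * {ffun 'I_t -> 'I_v})%type.

Definition valid_inter (k t v : nat) (T : interaction k t v) : bool :=
  T.1 + t <= k.

Definition rho (N k t v : nat) (A : array N k v) (T : interaction k t v)
  : {set 'I_N} :=
  [set r : 'I_N | [forall j : 'I_t, forall c : 'I_k,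
     (nat_of_ord c == T.1 + j) ==> (A r c == T.2 j)]].

Definition rho_set (N k t v : nat) (A : array N k v)
  (TT : {set interaction k t v}) : {set 'I_N} :=
  \bigcup_(T in TT) rho A T.

Definition is_CDA (d t N k v : nat) (A : array N k v) : Prop :=
  (forall T : interaction k t v, valid_inter T -> rho A T != set0) /\
  (forall TT : {set interaction k t v},
     (forall T, T \in TT -> valid_inter T) -> #|TT| = d ->
     forall T : interaction k t v, valid_inter T ->
       (rho A T \subset rho_set A TT <-> T \in TT)).

Definition is_optimum_CDA (d t N k v : nat) (A : array N k v) : Prop :=
  is_CDA d t A /\ N = (d.+1 * v ^ t)%N.

From mathcomp Require Import all_boot.
From mathcomp Require Import ssralg zmodp zify.
Set Implicit Arguments. Unset Strict Implicit. Unset Printing Implicit Defensive.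
Import GRing.Theory.

(* Take the (d+1) v^2 rows (s, x, y) with s < d+1 and x, y in Z_v, and the
   four columns x, y, x + s, y + s.  For each s, a row is determined by its
   entries in any two consecutive columns, so every consecutive 2-way
   interaction is covered exactly d+1 times.  Since d < v, the shifts s are
   distinct in Z_v, and a row is also determined by its entries in any three
   consecutive columns; hence two distinct interactions share at most one row.
   Then d interactions other than T cover at most d of the d+1 rows of T. *)

Lemma cardI_bigcup_le (T I : finType) (X : {set T}) (P : {pred I})
    (F : I -> {set T}) :
  #|X :&: \bigcup_(i in P) F i| <= \sum_(i in P) #|X :&: F i|.
Proof.
elim/big_rec2: _ => [|i n U _ leUn]; first by rewrite setI0 cards0.
rewrite setIUr; apply: (leq_trans (leq_card_setU _ _).1).
by rewrite leq_add2l.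
Qed.

Lemma is_CDA_of_cover_overlap d t N k v (A : array N k v) :
  (forall T : interaction k t v, valid_inter T -> d < #|rho A T|) ->
  (forall T T' : interaction k t v, valid_inter T -> valid_inter T' ->
      T != T' -> #|rho A T :&: rho A T'| <= 1) ->
  is_CDA d t A.
Proof.
move=> cover overlap; split=> [T vT|TT vTT cardTT T vT].
  by rewrite -card_gt0; exact: leq_ltn_trans (leq0n d) (cover T vT).
split=> [subT|TinTT]; last exact: (bigcup_sup T TinTT).
apply/negPn/negP => TnTT.
have : #|rho A T| <= d.
  move/setIidPl: subT => <-; rewrite /rho_set.
  apply: (leq_trans (cardI_bigcup_le (rho A T) TT (rho A))).
  rewrite -cardTT -sum1_card; apply: leq_sum => T' T'in.
  by apply: overlap => //; [exact: vTT | apply: contraNneq TnTT => ->].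
by rewrite leqNgt cover.
Qed.

Lemma rho_same_start_eq N k t v (A : array N k v) (T T' : interaction k t v) r :
  valid_inter T -> T.1 = T'.1 -> r \in rho A T -> r \in rho A T' -> T = T'.
Proof.
rewrite /valid_inter => vT; case: T T' vT => [i f] [_ f'] /= vT <-.
rewrite !inE => /forallP rT /forallP rT'; congr (_, _); apply/ffunP => j.
have jk : i + j < k by apply: leq_trans vT; rewrite ltn_add2l.
move: (rT j) (rT' j) => /forallP/(_ (Ordinal jk)) /= /implyP/(_ (eqxx _))/eqP <-.
by move=> /forallP/(_ (Ordinal jk)) /= /implyP/(_ (eqxx _))/eqP.
Qed.

Lemma in_rho2P N k v (G : 'I_N -> nat -> 'I_v) (T : interaction k 2 v) r :
  valid_inter T ->
  reflect (G r T.1 = T.2 ord0 /\ G r T.1.+1 = T.2 ord_max)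
          (r \in rho (fun r (c : 'I_k) => G r c) T).
Proof.
rewrite /valid_inter => vT.
have c0k : T.1 < k by lia.
have c1k : T.1.+1 < k by lia.
rewrite inE; apply: (iffP forallP) => [rT | [G0 G1] j].
  split.
    move: (rT ord0) => /forallP/(_ (Ordinal c0k))/implyP.
    by rewrite /= addn0 eqxx => /(_ isT)/eqP.
  move: (rT ord_max) => /forallP/(_ (Ordinal c1k))/implyP.
  by rewrite /= addn1 eqxx => /(_ isT)/eqP.
apply/forallP=> c; apply/implyP=> /eqP ->.
case: j => [[|[|//]] j2] /=.
  by rewrite addn0 G0; apply/eqP; congr (T.2 _); apply: val_inj.
by rewrite addn1 G1; apply/eqP; congr (T.2 _); apply: val_inj.
Qed.

Section ShiftArray.

Variables (n d k : nat).
Hypothesis d_lt_v : d + 1 <= n.+1.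
Hypothesis k_le4 : k <= 4.

Local Notation shift_row := ('I_(d + 1) * 'I_n.+1 * 'I_n.+1)%type.
Local Notation N := ((d + 1) * n.+1 ^ 2).

Definition shift_entry (p : shift_row) (c : nat) : 'I_n.+1 :=
  let: (s, x, y) := p in
  let s' : 'I_n.+1 := inZp s in
  match c with 0 => x | 1 => y | 2 => (x + s')%R | _ => (y + s')%R end.

Lemma inZp_shift_inj (s1 s2 : 'I_(d + 1)) :
  (inZp s1 : 'I_n.+1) = inZp s2 -> s1 = s2.
Proof.
move/(congr1 val) => /=.
by rewrite !modn_small => [/val_inj||]; try apply: leq_trans (ltn_ord _) d_lt_v.
Qed.

Lemma shift_entry_agree_eq p q c c' :
  c < c' <= 2 ->
  shift_entry p c = shift_entry q c -> shift_entry p c.+1 = shift_entry q c.+1 ->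
  shift_entry p c' = shift_entry q c' -> shift_entry p c'.+1 = shift_entry q c'.+1 ->
  p = q.
Proof.
case/andP; case: p q => [[s x] y] [[s' x'] y'].
case: c => [|[|//]]; case: c' => [|[|[|//]]] //= _ _.
- by move=> -> -> _ /addrI/inZp_shift_inj ->.
- by move=> -> -> _ /addrI/inZp_shift_inj ->.
- by move=> -> exs _ /addrI/inZp_shift_inj es; move: exs; rewrite es => /addIr ->.
Qed.

Definition covering_row (c : nat) (a b : 'I_n.+1) (s : 'I_(d + 1)) : shift_row :=
  let s' : 'I_n.+1 := inZp s in
  match c with
  | 0 => (s, a, b)
  | 1 => (s, b - s', a)%R
  | _ => (s, a - s', b - s')%R
  end.

Lemma covering_rowE c a b s : c <= 2 ->
  shift_entry (covering_row c a b s) c = a /\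
  shift_entry (covering_row c a b s) c.+1 = b.
Proof. by case: c => [|[|[|//]]] _ //=; rewrite !subrK. Qed.

Lemma covering_row_inj c a b : injective (covering_row c a b).
Proof. by move=> s1 s2; case: c => [|[|?]] []. Qed.

Lemma card_shift_row : N = #|{: shift_row}|.
Proof. by rewrite !card_prod !card_ord expnS expn1 mulnA. Qed.

Definition row_of (r : 'I_N) : shift_row := enum_val (cast_ord card_shift_row r).
Definition index_of (p : shift_row) : 'I_N :=
  cast_ord (esym card_shift_row) (enum_rank p).

Lemma index_ofK : cancel index_of row_of.
Proof. by move=> p; rewrite /row_of /index_of cast_ordKV enum_rankK. Qed.

Lemma row_of_inj : injective row_of.
Proof. by move=> r1 r2 /enum_val_inj /cast_ord_inj. Qed.

Definition shift_entry_at (r : 'I_N) (c : nat) := shift_entry (row_of r) c.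

Definition shift_array : array N k n.+1 := fun r c => shift_entry_at r c.

Lemma valid_start_le2 (T : interaction k 2 n.+1) : valid_inter T -> T.1 <= 2.
Proof. by rewrite /valid_inter; lia. Qed.

Lemma shift_array_cover (T : interaction k 2 n.+1) :
  valid_inter T -> d < #|rho shift_array T|.
Proof.
move=> vT; pose h s := index_of (covering_row T.1 (T.2 ord0) (T.2 ord_max) s).
have h_inj : injective h.
  by move=> s1 s2 /(can_inj index_ofK) /covering_row_inj.
have h_sub : h @: setT \subset rho shift_array T.
  apply/subsetP => _ /imsetP [s _ ->]; apply/(in_rho2P shift_entry_at) => //.
  rewrite /h /shift_entry_at index_ofK.
  by apply: covering_rowE; exact: valid_start_le2.
apply: leq_trans (subset_leq_card h_sub).
by rewrite card_imset // cardsT card_ord addn1.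
Qed.

Lemma shift_array_overlap (T T' : interaction k 2 n.+1) :
  valid_inter T -> valid_inter T' -> T != T' ->
  #|rho shift_array T :&: rho shift_array T'| <= 1.
Proof.
move=> vT vT' neqT.
apply/card_le1_eqP => r1 r2 /setIP [r1T r1T'] /setIP [r2T r2T'].
have agree (U : interaction k 2 n.+1) : valid_inter U ->
    r1 \in rho shift_array U -> r2 \in rho shift_array U ->
    shift_entry_at r1 U.1 = shift_entry_at r2 U.1 /\
    shift_entry_at r1 U.1.+1 = shift_entry_at r2 U.1.+1.
  move=> vU /(in_rho2P shift_entry_at _ vU) [-> ->].
  by move=> /(in_rho2P shift_entry_at _ vU) [-> ->].
have [e1 e2] := agree T vT r1T r2T.
have [e1' e2'] := agree T' vT' r1T' r2T'.
move: (valid_start_le2 vT) (valid_start_le2 vT') => le2 le2'.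
apply: row_of_inj; case: (ltngtP T.1 T'.1) => [lt|lt|eq1].
- by apply: (shift_entry_agree_eq (c := T.1) (c' := T'.1)); rewrite ?lt ?le2'.
- by apply: (shift_entry_agree_eq (c := T'.1) (c' := T.1)); rewrite ?lt ?le2.
- by case/eqP: neqT; apply: (rho_same_start_eq vT (val_inj eq1) r1T r1T').
Qed.

Lemma shift_array_is_CDA : is_CDA d 2 shift_array.
Proof.
apply: is_CDA_of_cover_overlap; [exact: shift_array_cover | exact: shift_array_overlap].
Qed.

End ShiftArray.

Theorem mainTheorem14 (v k d : nat) :
  2 <= v -> (k = 3 \/ k = 4) -> 0 < d -> d + 1 <= v ->
  exists A : array ((d + 1) * v ^ 2) k v,
    is_optimum_CDA d 2 A.
Proof.
case: v => [//|n] _ k34 _ d_lt_v.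
have k_le4 : k <= 4 by case: k34 => ->.
exists (@shift_array n d k); split; last by rewrite addn1.
exact: shift_array_is_CDA d_lt_v k_le4.
Qed.
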